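(* Let $(X,d)$ be a compact metric space and let $f_{1,\infty}=(f_n)_{n=1}^\infty$ be a sequence of continuous maps $f_n:X\to X$ converging uniformly to a map $f:X\to X$. Then for every $N\in\mathbb{N}$, $(X,f_{1,\infty})$ is DC2' if and only if its $N$-th iterate $(X,f_{1,\infty}^{[N]})$ is DC2'.
   Context: For $i,n\in\mathbb{N}$ write $f_i^n=f_{i+n-1}\circ\cdots\circ f_i$ and $f_i^0=\mathrm{id}_X$. The $N$-th iterate is $f_{1,\infty}^{[N]}=(f_{N(n-1)+1}^N)_{n=1}^\infty$, whose $n$-fold composition from index $1$ is $f_1^{Nn}$. For a non-autonomous system $g_{1,\infty}$ with compositions $g_1^i$, points $x,y\in X$ and $t>0$, set $\Phi(g_{1,\infty},x,y,t)=\liminf_{n\to\infty}\frac1n\#\{0\le i\le n-1: d(g_1^i(x),g_1^i(y))<t\}$ and $\Phi^*(g_{1,\infty},x,y,t)=\limsup_{n\to\infty}\frac1n\#\{0\le i\le n-1: d(g_1^i(x),g_1^i(y))<t\}$. The system is DC2' if there is an uncountable $S\subseteq X$ such that for all distinct $x,y\in S$: $\Phi(g_{1,\infty},x,y,\varepsilon)=0$ for some $\varepsilon>0$ and $\Phi^*(g_{1,\infty},x,y,t)>0$ for all $t>0$. *)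

From Stdlib Require Import Reals List.
From Coquelicot Require Import Coquelicot.
Open Scope R_scope.

Definition is_metric {X : Type} (d : X -> X -> R) : Prop :=
  (forall x y, 0 <= d x y) /\
  (forall x y, d x y = 0 <-> x = y) /\
  (forall x y, d x y = d y x) /\
  (forall x y z, d x z <= d x y + d y z).

Definition mopen {X : Type} (d : X -> X -> R) (U : X -> Prop) : Prop :=
  forall x, U x -> exists eps, 0 < eps /\ forall y, d x y < eps -> U y.

Definition mcompact {X : Type} (d : X -> X -> R) : Prop :=
  forall C : (X -> Prop) -> Prop,
    (forall U, C U -> mopen d U) ->
    (forall x, exists U, C U /\ U x) ->
    exists l : list (X -> Prop),
      (forall U, In U l -> C U) /\ (forall x, exists U, In U l /\ U x).

Definition mcontinuous {X : Type} (d : X -> X -> R) (g : X -> X) : Prop :=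
  forall x eps, 0 < eps -> exists delta, 0 < delta /\
    forall y, d x y < delta -> d (g x) (g y) < eps.

(* A sequence is 0-indexed: f k stands for the paper's f_{k+1}. *)
Definition unif_conv {X : Type} (d : X -> X -> R) (f : nat -> X -> X)
  (g : X -> X) : Prop :=
  forall eps, 0 < eps -> exists M, forall n x, (M <= n)%nat -> d (f n x) (g x) < eps.

(* comp f i n = f_{i+n-1} o ... o f_i in 0-based indexing (comp f i 0 = id) *)
Fixpoint comp {X : Type} (f : nat -> X -> X) (i n : nat) (x : X) : X :=
  match n with
  | O => x
  | S m => f (i + m)%nat (comp f i m x)
  end.

(* N-th iterate: n-th map (0-based) is f_{Nn+1}^N *)
Definition iterN {X : Type} (f : nat -> X -> X) (N : nat) : nat -> X -> X :=
  fun n => comp f (N * n) N.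

Fixpoint cnt {X : Type} (d : X -> X -> R) (g : nat -> X -> X) (x y : X) (t : R)
  (n : nat) : nat :=
  match n with
  | O => O
  | S m => (cnt d g x y t m +
            (if Rlt_dec (d (comp g 0 m x) (comp g 0 m y)) t then 1 else 0))%nat
  end.

Definition freq {X : Type} (d : X -> X -> R) (g : nat -> X -> X) (x y : X) (t : R)
  : nat -> R :=
  fun n => INR (cnt d g x y t (S n)) / INR (S n).

Definition Phi {X : Type} d (g : nat -> X -> X) x y t : Rbar :=
  LimInf_seq (freq d g x y t).
Definition Phi_star {X : Type} d (g : nat -> X -> X) x y t : Rbar :=
  LimSup_seq (freq d g x y t).

Definition uncountable {X : Type} (S : X -> Prop) : Prop :=
  ~ exists h : X -> nat, forall x y, S x -> S y -> h x = h y -> x = y.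

Definition DC2' {X : Type} (d : X -> X -> R) (g : nat -> X -> X) : Prop :=
  exists S : X -> Prop, uncountable S /\
    forall x y, S x -> S y -> x <> y ->
      (exists eps, 0 < eps /\ Phi d g x y eps = Finite 0) /\
      (forall t, 0 < t -> Rbar_lt (Finite 0) (Phi_star d g x y t)).

From Stdlib Require Import Reals Lra Lia List.
From Coquelicot Require Import Coquelicot.
Open Scope R_scope.

(* For a compact space the maps [f n], continuous and uniformly convergent, are
   uniformly equicontinuous, hence so are the compositions of at most [N] of them:
   for every [eps] there is [delta] such that two orbits [delta]-close at time [i]
   remain [eps]-close at the times [i, ..., i + N].  Counting the close times of
   [f] up to [N * M] and those of its [N]-th iterate up to [M] therefore compare
   block by block, once the thresholds are shrunk from [eps] to [delta].  These
   comparisons preserve both "lower density 0" and "positive upper density", i.e.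
   the two conditions DC2' imposes on a pair, so the same uncountable set works
   for both systems. *)

Lemma comp_add {X : Type} (f : nat -> X -> X) i a b x :
  comp f i (a + b) x = comp f (i + a) b (comp f i a x).
Proof.
  induction b as [|b IH]; simpl.
  - rewrite Nat.add_0_r; reflexivity.
  - rewrite Nat.add_succ_r; simpl; rewrite IH; f_equal; lia.
Qed.

Lemma comp_iterN {X : Type} (f : nat -> X -> X) N m x :
  comp (iterN f N) 0 m x = comp f 0 (N * m) x.
Proof.
  induction m as [|m IH]; simpl.
  - rewrite Nat.mul_0_r; reflexivity.
  - rewrite IH. unfold iterN. replace (N * S m)%nat with (N * m + N)%nat by lia.
    rewrite comp_add. reflexivity.
Qed.

Lemma list_pos_lower_bound {A : Type} (Q : A -> R -> Prop) (l : list A) :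
  (forall a, In a l -> exists r, 0 < r /\ Q a r) ->
  exists delta, 0 < delta /\ forall a, In a l -> exists r, delta <= r /\ Q a r.
Proof.
  induction l as [|a l IH]; intros Hl.
  - exists 1; split; [lra | intros a []].
  - destruct IH as [delta [Hdelta Hbound]]; [intros b Hb; apply Hl; right; exact Hb|].
    destruct (Hl a (or_introl eq_refl)) as [r [Hr HQ]].
    exists (Rmin r delta); split; [apply Rmin_glb_lt; lra|].
    intros b [<- | Hb].
    + exists r; split; [apply Rmin_l | exact HQ].
    + destruct (Hbound b Hb) as [r' [Hr' HQ']].
      exists r'; split; [pose proof (Rmin_r r delta); lra | exact HQ'].
Qed.

Section Equicontinuity.
Context {X : Type} (d : X -> X -> R).
Hypothesis Hd : is_metric d.

Let d_refl x : d x x = 0.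
Proof. apply (proj1 (proj2 Hd)); reflexivity. Qed.
Let d_sym x y : d x y = d y x.
Proof. apply Hd. Qed.
Let d_tri x y z : d x z <= d x y + d y z.
Proof. apply Hd. Qed.

Definition uniformly_continuous (g : X -> X) : Prop :=
  forall eps, 0 < eps -> exists delta, 0 < delta /\
    forall u v, d u v < delta -> d (g u) (g v) < eps.

Definition equicontinuous_on {I : Type} (P : I -> Prop) (F : I -> X -> X) : Prop :=
  forall eps, 0 < eps -> exists delta, 0 < delta /\
    forall i u v, P i -> d u v < delta -> d (F i u) (F i v) < eps.

Lemma mopen_ball x r : mopen d (fun y => d x y < r).
Proof.
  intros y Hy. exists (r - d x y); split; [lra|].
  intros z Hz. pose proof (d_tri x y z); lra.
Qed.

(* Heine-Cantor: cover the space by balls [B(x, r)] on whose double [B(x, 2 r)]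
   the map oscillates by less than [eps / 2]; the minimal radius of a finite
   subcover is a uniform modulus. *)
Lemma mcompact_uniformly_continuous (g : X -> X) :
  mcompact d -> mcontinuous d g -> uniformly_continuous g.
Proof.
  intros Hc Hg eps Heps.
  set (good x r := forall y, d x y < 2 * r -> d (g x) (g y) < eps / 2).
  set (ball_good x r U := good x r /\ U = (fun y => d x y < r)).
  destruct (Hc (fun U => exists x r, 0 < r /\ ball_good x r U)) as [l [Hl Hcover]].
  - intros U (x & r & _ & _ & ->). apply mopen_ball.
  - intros x. destruct (Hg x (eps / 2)) as [de [Hde Hcont]]; [lra|].
    exists (fun y => d x y < de / 2); split.
    + exists x, (de / 2); repeat split; [lra|]. intros y Hy; apply Hcont; lra.
    + rewrite d_refl; lra.
  - destruct (list_pos_lower_bound (fun U r => exists x, ball_good x r U) l)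
      as [delta [Hdelta Hbound]].
    { intros U HU. destruct (Hl U HU) as (x & r & Hr & Hball).
      exists r; split; [exact Hr | exists x; exact Hball]. }
    exists delta; split; [exact Hdelta|]. intros u v Huv.
    destruct (Hcover u) as [U [HU Uu]].
    destruct (Hbound U HU) as (r & Hr & x & Hgood & ->).
    assert (Hu : d (g x) (g u) < eps / 2) by (apply Hgood; lra).
    assert (Hv : d (g x) (g v) < eps / 2)
      by (apply Hgood; pose proof (d_tri x u v); lra).
    pose proof (d_tri (g u) (g x) (g v)). rewrite d_sym in Hu. lra.
Qed.

Lemma equicontinuous_on_weaken {I : Type} (P Q : I -> Prop) (F : I -> X -> X) :
  (forall i, Q i -> P i) -> equicontinuous_on P F -> equicontinuous_on Q F.
Proof.
  intros HQP HP eps Heps. destruct (HP eps Heps) as [delta [Hdelta H]].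
  exists delta; split; auto.
Qed.

Lemma equicontinuous_on_union {I : Type} (P Q : I -> Prop) (F : I -> X -> X) :
  equicontinuous_on P F -> equicontinuous_on Q F ->
  equicontinuous_on (fun i => P i \/ Q i) F.
Proof.
  intros HP HQ eps Heps.
  destruct (HP eps Heps) as [d1 [Hd1 H1]]. destruct (HQ eps Heps) as [d2 [Hd2 H2]].
  exists (Rmin d1 d2); split; [apply Rmin_glb_lt; lra|].
  pose proof (Rmin_l d1 d2); pose proof (Rmin_r d1 d2).
  intros i u v [Hi|Hi] Huv; [apply H1 | apply H2]; auto; lra.
Qed.

Lemma equicontinuous_on_lt (F : nat -> X -> X) :
  (forall n, uniformly_continuous (F n)) ->
  forall K, equicontinuous_on (fun n => (n < K)%nat) F.
Proof.
  intros HF K. induction K as [|K IH].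
  - intros eps Heps. exists 1; split; [lra | intros; lia].
  - apply (equicontinuous_on_weaken (fun n => (n < K)%nat \/ n = K)); [intros; lia|].
    apply equicontinuous_on_union; [exact IH|].
    intros eps Heps. destruct (HF K eps Heps) as [delta [Hdelta H]].
    exists delta; split; [exact Hdelta|]. intros n u v ->; apply H.
Qed.

(* Past the index [M] of [eps / 5]-uniform convergence, [f n] is compared with
   [f M] through [flim]; the finitely many earlier maps are handled directly. *)
Lemma uniform_limit_equicontinuous (f : nat -> X -> X) (flim : X -> X) :
  (forall n, uniformly_continuous (f n)) -> unif_conv d f flim ->
  equicontinuous_on (fun _ => True) f.
Proof.
  intros Hf Hu eps Heps.
  destruct (Hu (eps / 5)) as [M HM]; [lra|].
  destruct (Hf M (eps / 5)) as [d1 [Hd1 H1]]; [lra|].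
  destruct (equicontinuous_on_lt f Hf M eps Heps) as [d2 [Hd2 H2]].
  exists (Rmin d1 d2); split; [apply Rmin_glb_lt; lra|].
  intros n u v _ Huv. pose proof (Rmin_l d1 d2); pose proof (Rmin_r d1 d2).
  destruct (Nat.lt_ge_cases n M) as [Hn|Hn]; [apply H2; [exact Hn | lra]|].
  assert (HMuv : d (f M u) (f M v) < eps / 5) by (apply H1; lra).
  pose proof (HM n u Hn) as Hnu. pose proof (HM M u (le_n M)) as HMu.
  pose proof (HM M v (le_n M)) as HMv. pose proof (HM n v Hn) as Hnv.
  rewrite d_sym in HMu, Hnv.
  pose proof (d_tri (f n u) (flim u) (f n v)).
  pose proof (d_tri (flim u) (f M u) (f n v)).
  pose proof (d_tri (f M u) (f M v) (f n v)).
  pose proof (d_tri (f M v) (flim v) (f n v)).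
  lra.
Qed.

Lemma equicontinuous_comp (f : nat -> X -> X) :
  equicontinuous_on (fun _ => True) f ->
  forall k, equicontinuous_on (fun _ => True) (fun i => comp f i k).
Proof.
  intros Hf k. induction k as [|k IH]; intros eps Heps.
  - exists eps; split; auto.
  - destruct (Hf eps Heps) as [d1 [Hd1 H1]]. destruct (IH d1 Hd1) as [d2 [Hd2 H2]].
    exists d2; split; [exact Hd2|]. intros i u v _ Huv.
    exact (H1 _ _ _ I (H2 i u v I Huv)).
Qed.

Lemma equicontinuous_comp_le (f : nat -> X -> X) :
  equicontinuous_on (fun _ => True) f ->
  forall K, equicontinuous_on (fun p : nat * nat => (snd p <= K)%nat)
                              (fun p => comp f (fst p) (snd p)).
Proof.
  intros Hf.
  assert (Hexact : forall k, equicontinuous_on (fun p : nat * nat => snd p = k)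
                                               (fun p => comp f (fst p) (snd p))).
  { intros k eps Heps. destruct (equicontinuous_comp f Hf k eps Heps) as [delta [Hdelta H]].
    exists delta; split; [exact Hdelta|].
    intros [i j] u v Hj Huv; simpl in *; subst j. exact (H i u v I Huv). }
  intros K. induction K as [|K IH].
  - apply (equicontinuous_on_weaken (fun p : nat * nat => snd p = 0%nat));
      [intros; lia | apply Hexact].
  - apply (equicontinuous_on_weaken
             (fun p : nat * nat => (snd p <= K)%nat \/ snd p = S K)); [intros; lia|].
    apply equicontinuous_on_union; [exact IH | apply Hexact].
Qed.

End Equicontinuity.

Definition hit {X : Type} (d : X -> X -> R) (g : nat -> X -> X) (x y : X) (t : R)
  (i : nat) : Prop :=
  d (comp g 0 i x) (comp g 0 i y) < t.

Definition stays_close {X : Type} (d : X -> X -> R) (g : nat -> X -> X) (N : nat)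
  (delta eps : R) : Prop :=
  forall x y i j, (j <= N)%nat -> hit d g x y delta i -> hit d g x y eps (i + j).

Lemma uniform_limit_stays_close {X : Type} (d : X -> X -> R) (f : nat -> X -> X)
  (flim : X -> X) :
  is_metric d -> mcompact d -> (forall n, mcontinuous d (f n)) -> unif_conv d f flim ->
  forall N eps, 0 < eps -> exists delta, 0 < delta /\ stays_close d f N delta eps.
Proof.
  intros Hd Hc Hf Hu N eps Heps.
  assert (Hequi : equicontinuous_on d (fun _ => True) f).
  { apply (uniform_limit_equicontinuous d Hd f flim); [|exact Hu].
    intros n; apply mcompact_uniformly_continuous; auto. }
  destruct (equicontinuous_comp_le d f Hequi N eps Heps) as [delta [Hdelta H]].
  exists delta; split; [exact Hdelta|].
  intros x y i j Hj Hi. unfold hit. rewrite !comp_add. exact (H (i, j) _ _ Hj Hi).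
Qed.

Section Counting.
Context {X : Type} (d : X -> X -> R) (g : nat -> X -> X) (x y : X) (t : R).

Lemma cnt_succ n :
  cnt d g x y t (S n) = (cnt d g x y t n +
    if Rlt_dec (d (comp g 0 n x) (comp g 0 n y)) t then 1 else 0)%nat.
Proof. reflexivity. Qed.

Lemma cnt_le_add n k : (cnt d g x y t n <= cnt d g x y t (n + k))%nat.
Proof.
  induction k as [|k IH]; [rewrite Nat.add_0_r; lia|].
  rewrite Nat.add_succ_r, cnt_succ. lia.
Qed.

Lemma cnt_add_le n k : (cnt d g x y t (n + k) <= cnt d g x y t n + k)%nat.
Proof.
  induction k as [|k IH]; [rewrite Nat.add_0_r; lia|].
  rewrite Nat.add_succ_r, cnt_succ. destruct Rlt_dec; lia.
Qed.

Lemma cnt_add_hits n k : (forall j, (j < k)%nat -> hit d g x y t (n + j)) ->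
  cnt d g x y t (n + k) = (cnt d g x y t n + k)%nat.
Proof.
  induction k as [|k IH]; intros Hhit; [rewrite Nat.add_0_r; lia|].
  rewrite Nat.add_succ_r, cnt_succ, IH by (intros; apply Hhit; lia).
  destruct Rlt_dec as [|Hno]; [lia|]. exfalso; apply Hno, (Hhit k); lia.
Qed.

Lemma cnt_add_no_hits n k : (forall j, (j < k)%nat -> ~ hit d g x y t (n + j)) ->
  cnt d g x y t (n + k) = cnt d g x y t n.
Proof.
  induction k as [|k IH]; intros Hno; [rewrite Nat.add_0_r; lia|].
  rewrite Nat.add_succ_r, cnt_succ, IH by (intros; apply Hno; lia).
  destruct Rlt_dec as [Hhit|]; [|lia]. exfalso; apply (Hno k); [lia | exact Hhit].
Qed.

End Counting.

Section IterateCounts.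
Context {X : Type} (d : X -> X -> R) (f : nat -> X -> X) (x y : X) (N : nat).

Lemma cnt_iterN_succ t M :
  cnt d (iterN f N) x y t (S M) = (cnt d (iterN f N) x y t M +
    if Rlt_dec (d (comp f 0 (N * M) x) (comp f 0 (N * M) y)) t then 1 else 0)%nat.
Proof. rewrite cnt_succ, !comp_iterN. reflexivity. Qed.

Lemma cnt_iterN_mul_le delta eps : stays_close d f N delta eps ->
  forall M, (N * cnt d (iterN f N) x y delta M <= cnt d f x y eps (N * M))%nat.
Proof.
  intros Hclose M. induction M as [|M IH]; [simpl; lia|].
  rewrite cnt_iterN_succ. replace (N * S M)%nat with (N * M + N)%nat by lia.
  destruct Rlt_dec as [Hhit|_].
  - rewrite cnt_add_hits; [lia|]. intros j Hj. apply Hclose; [lia | exact Hhit].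
  - pose proof (cnt_le_add d f x y eps (N * M) N). lia.
Qed.

(* A [delta]-close time in the block [N M, N M + N) makes the time [N (M + 1)]
   [eps]-close, whence the shift to [S M]. *)
Lemma cnt_mul_le_iterN delta eps : stays_close d f N delta eps ->
  forall M, (cnt d f x y delta (N * M) <= N * cnt d (iterN f N) x y eps (S M))%nat.
Proof.
  intros Hclose M. induction M as [|M IH]; [rewrite Nat.mul_0_r; simpl; lia|].
  rewrite (cnt_iterN_succ eps (S M)). replace (N * S M)%nat with (N * M + N)%nat by lia.
  destruct Rlt_dec as [_|Hfar].
  - pose proof (cnt_add_le d f x y delta (N * M) N). lia.
  - rewrite cnt_add_no_hits; [lia|]. intros j Hj Hhit. apply Hfar.
    replace (N * M + N)%nat with (N * M + j + (N - j))%nat by lia.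
    apply Hclose; [lia | exact Hhit].
Qed.

Lemma cnt_iterN_le t : (1 <= N)%nat ->
  forall M, (cnt d (iterN f N) x y t M <= cnt d f x y t (N * M))%nat.
Proof.
  intros HN M. induction M as [|M IH]; [simpl; lia|].
  rewrite cnt_iterN_succ. replace (N * S M)%nat with (S (N * M) + (N - 1))%nat by lia.
  pose proof (cnt_le_add d f x y t (S (N * M)) (N - 1)) as Hle.
  rewrite cnt_succ in Hle. lia.
Qed.

End IterateCounts.

Definition null_lower_density (c : nat -> nat) : Prop :=
  forall eps, 0 < eps -> forall K, exists n, (K <= n)%nat /\ INR (c n) < eps * INR n.

Definition positive_upper_density (c : nat -> nat) : Prop :=
  exists a, 0 < a /\ forall K, exists n, (K <= n)%nat /\ a * INR n < INR (c n).

Lemma INR_S_pos n : 0 < INR (S n).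
Proof. apply lt_0_INR; lia. Qed.

Lemma LimInf_ratio_eq0_iff (c : nat -> nat) :
  LimInf_seq (fun n => INR (c (S n)) / INR (S n)) = Finite 0 <-> null_lower_density c.
Proof.
  split.
  - intros H eps Heps K.
    destruct (ex_LimInf_seq (fun n => INR (c (S n)) / INR (S n))) as [l Hl].
    rewrite (is_LimInf_seq_unique _ _ Hl) in H. subst l.
    destruct (proj1 (Hl (mkposreal eps Heps)) K) as [n [Hn Hlt]].
    exists (S n); split; [lia|]. apply Rlt_div_l; [apply INR_S_pos | cbn [pos] in Hlt; lra].
  - intros Hnull. apply is_LimInf_seq_unique. intros eps; split.
    + intros K. destruct (Hnull eps (cond_pos eps) (S K)) as [[|n] [Hn Hlt]]; [lia|].
      exists n; split; [lia|]. rewrite Rplus_0_l. apply Rlt_div_l; [apply INR_S_pos | exact Hlt].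
    + exists 0%nat. intros n _. pose proof (cond_pos eps).
      assert (0 <= INR (c (S n)) / INR (S n)) by (apply Rdiv_le_0_compat;
        [apply pos_INR | apply INR_S_pos]).
      lra.
Qed.

Lemma LimSup_ratio_pos_iff (c : nat -> nat) :
  Rbar_lt 0 (LimSup_seq (fun n => INR (c (S n)) / INR (S n))) <-> positive_upper_density c.
Proof.
  set (u n := INR (c (S n)) / INR (S n)).
  destruct (ex_LimSup_seq u) as [l Hl]. rewrite (is_LimSup_seq_unique _ _ Hl).
  assert (Hratio : forall a n, a < u n -> a * INR (S n) < INR (c (S n)))
    by (intros a n Hlt; apply Rlt_div_r; [apply INR_S_pos | exact Hlt]).
  split.
  - destruct l as [l| |]; simpl in Hl |- *; intros Hpos; [| |contradiction].
    + exists (l / 2); split; [lra|]. intros K.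
      assert (Hl2 : 0 < l / 2) by lra.
      destruct (proj1 (Hl (mkposreal _ Hl2)) K) as [n [Hn Hlt]].
      exists (S n); split; [lia|]. apply Hratio. cbn [pos] in Hlt; lra.
    + exists 1; split; [lra|]. intros K. destruct (Hl 1 K) as [n [Hn Hlt]].
      exists (S n); split; [lia | apply Hratio, Hlt].
  - intros [a [Ha Hhigh]].
    assert (Hfreq : forall K, exists n, (K <= n)%nat /\ a < u n).
    { intros K. destruct (Hhigh (S K)) as [[|n] [Hn Hlt]]; [lia|].
      exists n; split; [lia|]. apply Rlt_div_r; [apply INR_S_pos | exact Hlt]. }
    destruct l as [l| |]; simpl in Hl |- *; [|exact I|].
    + destruct (Rlt_or_le 0 l) as [|Hle]; [assumption | exfalso].
      destruct (proj2 (Hl (mkposreal a Ha))) as [K HK].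
      destruct (Hfreq K) as [n [Hn Hlt]]. specialize (HK n Hn). cbn [pos] in HK. lra.
    + destruct (Hl a) as [K HK]. destruct (Hfreq K) as [n [Hn Hlt]].
      specialize (HK n Hn). lra.
Qed.

Section DensityTransfer.
Variables (N : nat) (cf cg : nat -> nat).
Hypothesis HN : (1 <= N)%nat.

Let INR_N_pos : 0 < INR N.
Proof. apply lt_0_INR; lia. Qed.

Let div_mod_exists n : exists m r, n = (N * m + r)%nat /\ (r < N)%nat.
Proof.
  exists (n / N)%nat, (n mod N)%nat.
  split; [apply Nat.div_mod | apply Nat.mod_upper_bound]; lia.
Qed.

(* For [n] in the block [N m <= n < N (m + 1)], [N cg (m + 1) <= cf n + N], and the
   error [N] is negligible against [eps n] once [n] is large. *)
Lemma null_lower_density_coarse :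
  (forall M, (N * cg M <= cf (N * M))%nat) ->
  (forall n k, (cf (n + k) <= cf n + k)%nat) ->
  null_lower_density cf -> null_lower_density cg.
Proof.
  intros Hle Hlip Hnull eps Heps K.
  destruct (INR_archimed (eps / 2) (INR N)) as [n0 Hn0]; [lra|].
  destruct (Hnull (eps / 2) ltac:(lra) (Nat.max (N * (K + 1)) n0)) as [n [Hn Hlt]].
  destruct (div_mod_exists n) as [m [r [Hnm Hr]]].
  assert (Hblock : (N * cg (S m) <= cf n + N)%nat).
  { pose proof (Hle (S m)). pose proof (Hlip n (N - r)%nat).
    replace (N * S m)%nat with (n + (N - r))%nat in * by nia. lia. }
  assert (Hnlt : (n < N * S m)%nat) by nia.
  assert (Hn0n : (n0 <= n)%nat) by lia.
  exists (S m); split; [nia|].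
  apply le_INR in Hblock, Hn0n. apply lt_INR in Hnlt.
  rewrite plus_INR, !mult_INR in *.
  assert (eps * INR n < eps * (INR N * INR (S m))) by (apply Rmult_lt_compat_l; lra).
  apply (Rmult_lt_reg_l (INR N)); [exact INR_N_pos | nra].
Qed.

Lemma null_lower_density_fine :
  (forall M, (cf (N * M) <= N * cg (S M))%nat) ->
  null_lower_density cg -> null_lower_density cf.
Proof.
  intros Hle Hnull eps Heps K.
  destruct (Hnull (eps / 2) ltac:(lra) (K + 2)%nat) as [[|M] [HM Hlt]]; [lia|].
  exists (N * M)%nat; split; [nia|].
  pose proof (Hle M) as HleM. apply le_INR in HleM. rewrite !mult_INR in *.
  rewrite S_INR in *.
  assert (1 <= INR M) by (apply (le_INR 1); lia).
  assert (INR N * INR (cg (S M)) < INR N * (eps / 2 * (INR M + 1)))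
    by (apply Rmult_lt_compat_l; [exact INR_N_pos | exact Hlt]).
  assert (0 <= INR N * eps) by (pose proof INR_N_pos; nra).
  nra.
Qed.

Lemma positive_upper_density_coarse :
  (forall M, (cf (N * M) <= N * cg (S M))%nat) ->
  (forall n k, (cf n <= cf (n + k))%nat) ->
  positive_upper_density cf -> positive_upper_density cg.
Proof.
  intros Hle Hmono [a [Ha Hhigh]]. exists (a / 3); split; [lra|]. intros K.
  destruct (Hhigh (N * (K + 1))%nat) as [n [Hn Hlt]].
  destruct (div_mod_exists n) as [m [r [Hnm Hr]]].
  assert (Hblock : (cf n <= N * cg (S (S m)))%nat).
  { pose proof (Hle (S m)). pose proof (Hmono n (N - r)%nat).
    replace (N * S m)%nat with (n + (N - r))%nat in * by nia. lia. }
  assert (Hsize : (N * S (S m) <= 3 * n)%nat) by nia.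
  exists (S (S m)); split; [nia|].
  apply le_INR in Hblock, Hsize. rewrite !mult_INR in *.
  replace (INR 3) with 3 in Hsize by (simpl; lra).
  apply (Rmult_lt_reg_l (INR N)); [exact INR_N_pos | nra].
Qed.

Lemma positive_upper_density_fine :
  (forall M, (cg M <= cf (N * M))%nat) ->
  positive_upper_density cg -> positive_upper_density cf.
Proof.
  intros Hle [a [Ha Hhigh]].
  exists (a / INR N); split; [apply Rdiv_lt_0_compat; [exact Ha | exact INR_N_pos]|].
  intros K. destruct (Hhigh K) as [m [Hm Hlt]]. exists (N * m)%nat; split; [nia|].
  pose proof (Hle m) as HleM. apply le_INR in HleM. rewrite mult_INR in *.
  replace (a / INR N * (INR N * INR m)) with (a * INR m)
    by (field; apply Rgt_not_eq, INR_N_pos).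
  lra.
Qed.

End DensityTransfer.

Definition scrambled_pair {X : Type} (d : X -> X -> R) (g : nat -> X -> X) (x y : X)
  : Prop :=
  (exists eps, 0 < eps /\ Phi d g x y eps = Finite 0) /\
  (forall t, 0 < t -> Rbar_lt (Finite 0) (Phi_star d g x y t)).

Section ScrambledPairs.
Context {X : Type} (d : X -> X -> R) (f : nat -> X -> X) (N : nat) (x y : X).
Hypothesis HN : (1 <= N)%nat.
Hypothesis Hclose : forall eps, 0 < eps -> exists delta, 0 < delta /\ stays_close d f N delta eps.

Lemma scrambled_pair_iterN : scrambled_pair d f x y -> scrambled_pair d (iterN f N) x y.
Proof.
  intros [[eps [Heps Hnull]] Hpos]. split.
  - destruct (Hclose eps Heps) as [delta [Hdelta Hde]].
    exists delta; split; [exact Hdelta|]. apply LimInf_ratio_eq0_iff.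
    apply (null_lower_density_coarse N (cnt d f x y eps)); [exact HN | | |].
    + exact (cnt_iterN_mul_le d f x y N delta eps Hde).
    + apply cnt_add_le.
    + apply LimInf_ratio_eq0_iff, Hnull.
  - intros t Ht. destruct (Hclose t Ht) as [delta [Hdelta Hde]].
    apply LimSup_ratio_pos_iff.
    apply (positive_upper_density_coarse N (cnt d f x y delta)); [exact HN | | |].
    + exact (cnt_mul_le_iterN d f x y N delta t Hde).
    + apply cnt_le_add.
    + apply LimSup_ratio_pos_iff, Hpos, Hdelta.
Qed.

Lemma scrambled_pair_of_iterN : scrambled_pair d (iterN f N) x y -> scrambled_pair d f x y.
Proof.
  intros [[eps [Heps Hnull]] Hpos]. split.
  - destruct (Hclose eps Heps) as [delta [Hdelta Hde]].
    exists delta; split; [exact Hdelta|]. apply LimInf_ratio_eq0_iff.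
    apply (null_lower_density_fine N _ (cnt d (iterN f N) x y eps)); [exact HN | |].
    + exact (cnt_mul_le_iterN d f x y N delta eps Hde).
    + apply LimInf_ratio_eq0_iff, Hnull.
  - intros t Ht. apply LimSup_ratio_pos_iff.
    apply (positive_upper_density_fine N _ (cnt d (iterN f N) x y t)); [exact HN | |].
    + exact (cnt_iterN_le d f x y N t HN).
    + apply LimSup_ratio_pos_iff, Hpos, Ht.
Qed.

End ScrambledPairs.

Theorem mainTheorem2 (X : Type) (d : X -> X -> R) (f : nat -> X -> X)
  (flim : X -> X) :
  is_metric d -> mcompact d ->
  (forall n, mcontinuous d (f n)) ->
  unif_conv d f flim ->
  forall N : nat, (1 <= N)%nat ->
  (DC2' d f <-> DC2' d (iterN f N)).
Proof.
  intros Hd Hc Hf Hu N HN.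
  pose proof (uniform_limit_stays_close d f flim Hd Hc Hf Hu N) as Hclose.
  split; intros [S [HS Hpairs]]; exists S; (split; [exact HS | intros x y Sx Sy Hxy]).
  - exact (scrambled_pair_iterN d f N x y HN Hclose (Hpairs x y Sx Sy Hxy)).
  - exact (scrambled_pair_of_iterN d f N x y HN Hclose (Hpairs x y Sx Sy Hxy)).
Qed.
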